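(* Let $G$ be a group acting linearly and isometrically on a real Hilbert space $M$. Let $X=t_0+\sigma\epsilon$ where $t_0$ is a fixed point of the action, $\sigma>0$, $\mathbb{E}(\epsilon)=0$ and $\mathbb{E}(\|\epsilon\|^2)=1$. If $[X]$ admits a Fréchet mean $[m_\star]$, then $$d_Q([t_0],[m_\star])=\sigma\sup_{\|v\|=1}\mathbb{E}\Big(\sup_{g\in G}\langle v,g\cdot\epsilon\rangle\Big).$$
   Context: $M$ is a real Hilbert space with inner product $\langle\cdot,\cdot\rangle$ and norm $\|\cdot\|$; the action is linear and isometric ($\|g\cdot x\|=\|x\|$). $[m]=\{g\cdot m:g\in G\}$, $d_Q([a],[b])=\inf_{g}\|g\cdot a-b\|$, $F(m)=\mathbb{E}\big(\inf_g\|g\cdot X-m\|^2\big)$, and $[m_\star]$ is a Fréchet mean of $[X]$ if $m_\star$ globally minimises $F$. *)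

From HB Require Import structures.
From mathcomp Require Import all_boot all_order all_algebra.
From mathcomp Require Import monoid.
From mathcomp Require Import all_classical all_reals all_analysis.
Set Implicit Arguments. Unset Strict Implicit. Unset Printing Implicit Defensive.
Import Order.TTheory GRing.Theory Num.Theory.
Import numFieldNormedType.Exports.
Local Open Scope classical_set_scope.
Local Open Scope ring_scope.

(* Together with completeness of [M] this makes [M] a real Hilbert space. *)
Definition is_inner_product (R : realType) (M : normedModType R)
  (ip : M -> M -> R) : Prop :=
  [/\ (forall x y, ip x y = ip y x),
      (forall (a : R) (x y z : M), ip (a *: x + y) z = a * ip x z + ip y z) &
      (forall x : M, `|x| ^+ 2 = ip x x)].

Definition linear_isometric_action (R : realType) (G : groupType)
  (M : normedModType R) (act : G -> M -> M) : Prop :=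
  [/\ (forall x, act 1%g x = x),
      (forall g h x, act (g * h)%g x = act g (act h x)),
      (forall g (a : R) (x y : M), act g (a *: x + y) = a *: act g x + act g y) &
      (forall g x, `|act g x| = `|x|)].

Definition dQ (R : realType) (G : groupType) (M : normedModType R)
  (act : G -> M -> M) (a b : M) : R :=
  inf [set `|act g a - b| | g in [set: G]].

Definition orbit_sqdist (R : realType) (G : groupType) (M : normedModType R)
  (act : G -> M -> M) (x m : M) : R :=
  inf [set `|act g x - m| ^+ 2 | g in [set: G]].

Definition frechet_fun (R : realType) (d : measure_display) (T : measurableType d)
  (P : probability T R) (G : groupType) (M : normedModType R)
  (act : G -> M -> M) (X : T -> M) (m : M) : \bar R :=
  (\int[P]_w (orbit_sqdist act (X w) m)%:E)%E.

(* [m_star] is (a representative of) a Fréchet mean of [X]: it globally minimises F *)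
Definition is_frechet_mean (R : realType) (d : measure_display) (T : measurableType d)
  (P : probability T R) (G : groupType) (M : normedModType R)
  (act : G -> M -> M) (X : T -> M) (m_star : M) : Prop :=
  forall m : M, (frechet_fun P act X m_star <= frechet_fun P act X m)%E.

Definition orbit_sup_ip (R : realType) (G : groupType) (M : normedModType R)
  (ip : M -> M -> R) (act : G -> M -> M) (v e : M) : R :=
  sup [set ip v (act g e) | g in [set: G]].

From HB Require Import structures.
From mathcomp Require Import all_boot all_order all_algebra.
From mathcomp Require Import monoid.
From mathcomp Require Import all_classical all_reals all_analysis.
From mathcomp Require Import ring lra.
Set Implicit Arguments.
Unset Strict Implicit.
Unset Printing Implicit Defensive.
Import Order.TTheory GRing.Theory Num.Theory.
Import numFieldNormedType.Exports.
Local Open Scope classical_set_scope.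
Local Open Scope ring_scope.

(* Write a candidate mean as [t0 + u].  Since [t0] is fixed and the action is
   linear and isometric, inf_g ||g.X - (t0 + u)||^2 is
   sigma^2 ||eps||^2 + ||u||^2 - 2 sigma sup_g <u, g.eps>, hence
   F(t0 + u) = sigma^2 + ||u||^2 - 2 sigma k(u) with k(u) = E sup_g <u, g.eps>.
   The function k is nonnegative (take g = 1 and use E eps = 0) and positively
   homogeneous, so k(u) <= ||u|| H with H = sup_{||v|| = 1} k(v).  Comparing the
   minimiser u with the competitor sigma k(v) v for a unit v gives
   sigma^2 k(v)^2 <= 2 sigma ||u|| H - ||u||^2; taking the sup over v yields
   (sigma H - ||u||)^2 <= 0, and d_Q([t0], [t0 + u]) = ||u|| because t0 is fixed. *)

Section SupInf.
Variable R : realType.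

Lemma sup_image_cst (I : Type) (A : set I) (x : R) :
  A !=set0 -> sup [set x | _ in A] = x.
Proof. by move=> /set0P A0; rewrite set_cst (negbTE A0) sup1. Qed.

Lemma inf_image_cst (I : Type) (A : set I) (x : R) :
  A !=set0 -> inf [set x | _ in A] = x.
Proof. by move=> /set0P A0; rewrite set_cst (negbTE A0) inf1. Qed.

Lemma sup_image_affine (I : Type) (A : set I) (f : I -> R) (c a : R) :
  0 < c -> has_sup (f @` A) ->
  sup [set c * f i + a | i in A] = c * sup (f @` A) + a.
Proof.
move=> c0 supA; have [[_ [i0 Ai0 _]] _] := supA.
have le_sup i : A i -> f i <= sup (f @` A).
  by move=> Ai; apply: sup_upper_bound => //; exists i.
have supcA : has_sup [set c * f i + a | i in A].
  split; first by exists (c * f i0 + a), i0.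
  by exists (c * sup (f @` A) + a) => _ [i Ai <-]; rewrite lerD2r ler_pM2l // le_sup.
apply/le_anti/andP; split.
  apply: ge_sup; first by exists (c * f i0 + a), i0.
  by move=> _ [i Ai <-]; rewrite lerD2r ler_pM2l // le_sup.
rewrite -lerBrDr -ler_pdivlMl //; apply: ge_sup; first by exists (f i0), i0.
move=> _ [i Ai <-]; rewrite ler_pdivlMl // lerBrDr.
by apply: sup_upper_bound => //; exists i.
Qed.

Lemma inf_image_affine (I : Type) (A : set I) (f : I -> R) (c a : R) :
  0 < c -> has_sup (f @` A) ->
  inf [set a - c * f i | i in A] = a - c * sup (f @` A).
Proof.
move=> c0 supA; rewrite /inf.
have -> : a - c * sup (f @` A) = - (c * sup (f @` A) + - a) by rewrite opprD opprK addrC.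
rewrite -sup_image_affine //.
by congr (- sup _); apply/seteqP; split=> [_ [_ [i Ai <-] <-]|_ [i Ai <-]];
  [exists i; rewrite // opprB addrC | exists (a - c * f i); [exists i|rewrite opprB addrC]].
Qed.
End SupInf.

Section InnerProduct.
Variables (R : realType) (M : normedModType R) (ip : M -> M -> R).
Hypothesis ip_inner : is_inner_product ip.

Lemma ipC x y : ip x y = ip y x. Proof. by case: ip_inner. Qed.

Lemma ip_sqnorm x : `|x| ^+ 2 = ip x x. Proof. by case: ip_inner. Qed.

Lemma ipDl x y z : ip (x + y) z = ip x z + ip y z.
Proof. by case: ip_inner => _ ipL _; rewrite -[x]scale1r ipL mul1r scale1r. Qed.

Lemma ip0l z : ip 0 z = 0.
Proof. by apply: (addrI (ip 0 z)); rewrite addr0 -ipDl addr0. Qed.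

Lemma ipZl a x z : ip (a *: x) z = a * ip x z.
Proof. by case: ip_inner => _ ipL _; rewrite -[_ *: _]addr0 ipL ip0l addr0. Qed.

Lemma ipNl x z : ip (- x) z = - ip x z.
Proof. by rewrite -scaleN1r ipZl mulN1r. Qed.

Lemma sqnormZB (s : R) y u :
  `|s *: y - u| ^+ 2 = s ^+ 2 * `|y| ^+ 2 - 2 * s * ip u y + `|u| ^+ 2.
Proof.
rewrite !ip_sqnorm ipDl ipZl ipNl (ipC y) (ipC u) ipDl ipZl ipNl ipDl ipZl ipNl.
by rewrite (ipC u y); ring.
Qed.

Lemma cauchy_schwarz x y : ip x y <= `|x| * `|y|.
Proof.
have [->|x0] := eqVneq x 0; first by rewrite ip0l normr0 mul0r.
have [->|y0] := eqVneq y 0; first by rewrite ipC ip0l normr0 mulr0.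
have nx : 0 < `|x| by rewrite normr_gt0.
have ny : 0 < `|y| by rewrite normr_gt0.
have := sqr_ge0 `| `|y| *: x - `|x| *: y |.
rewrite sqnormZB ipZl normrZ ger0_norm // (ipC y x).
have : 0 < `|x| * `|y| by rewrite mulr_gt0.
nra.
Qed.

Lemma norm_ip_le x y : `|ip x y| <= `|x| * `|y|.
Proof.
rewrite ler_norml cauchy_schwarz andbT lerNl -ipNl -(normrN x).
exact: cauchy_schwarz.
Qed.
End InnerProduct.

Lemma dQ_fixed (R : realType) (G : groupType) (M : normedModType R)
    (act : G -> M -> M) (t0 m : M) :
  (forall g, act g t0 = t0) -> dQ act t0 m = `|t0 - m|.
Proof.
move=> t0_fixed; rewrite /dQ; under eq_imagel do rewrite t0_fixed.
by rewrite inf_image_cst //; exists 1%g.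
Qed.

Section IsometricAction.
Variables (R : realType) (G : groupType) (M : normedModType R).
Variables (ip : M -> M -> R) (act : G -> M -> M).
Hypothesis ip_inner : is_inner_product ip.
Hypothesis act_isometric : linear_isometric_action act.

Lemma act1 x : act 1%g x = x. Proof. by case: act_isometric. Qed.

Lemma act_scaleD g a x y : act g (a *: x + y) = a *: act g x + act g y.
Proof. by case: act_isometric. Qed.

Lemma norm_act g x : `|act g x| = `|x|. Proof. by case: act_isometric. Qed.

Lemma ip_act_le u e g : ip u (act g e) <= `|u| * `|e|.
Proof. by rewrite -(norm_act g e) cauchy_schwarz. Qed.

Lemma has_sup_ip_orbit u e : has_sup [set ip u (act g e) | g in [set: G]].
Proof.
split; first by exists (ip u (act 1%g e)), 1%g.
by exists (`|u| * `|e|) => _ [g _ <-]; exact: ip_act_le.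
Qed.

Lemma orbit_sup_ip_ge u e g : ip u (act g e) <= orbit_sup_ip ip act u e.
Proof. by apply: sup_upper_bound; [exact: has_sup_ip_orbit | exists g]. Qed.

Lemma orbit_sup_ip_le u e : orbit_sup_ip ip act u e <= `|u| * `|e|.
Proof.
apply: ge_sup; first by exists (ip u (act 1%g e)), 1%g.
by move=> _ [g _ <-]; exact: ip_act_le.
Qed.

Lemma norm_orbit_sup_ip_le u e : `|orbit_sup_ip ip act u e| <= `|u| * `|e|.
Proof.
rewrite ler_norml orbit_sup_ip_le andbT.
apply: le_trans (orbit_sup_ip_ge u e 1%g); rewrite act1.
by have := norm_ip_le ip_inner u e; rewrite ler_norml => /andP[].
Qed.

Lemma orbit_sup_ipZ l u e : 0 <= l ->
  orbit_sup_ip ip act (l *: u) e = l * orbit_sup_ip ip act u e.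
Proof.
rewrite le_eqVlt => /orP[/eqP <-|l_gt0]; rewrite /orbit_sup_ip.
  under eq_imagel do rewrite scale0r (ip0l ip_inner).
  by rewrite mul0r sup_image_cst //; exists 1%g.
under eq_imagel do rewrite (ipZl ip_inner) -[_ * _]addr0.
by rewrite sup_image_affine ?addr0 //; exact: has_sup_ip_orbit.
Qed.

Lemma orbit_sqdist_shift t0 (s : R) e u : (forall g, act g t0 = t0) -> 0 < s ->
  orbit_sqdist act (t0 + s *: e) (t0 + u) =
  s ^+ 2 * `|e| ^+ 2 + `|u| ^+ 2 - 2 * s * orbit_sup_ip ip act u e.
Proof.
move=> t0_fixed s_gt0; rewrite /orbit_sqdist.
have expand g : `|act g (t0 + s *: e) - (t0 + u)| ^+ 2 =
    s ^+ 2 * `|e| ^+ 2 + `|u| ^+ 2 - 2 * s * ip u (act g e).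
  rewrite (addrC t0) act_scaleD t0_fixed opprD addrA addrK (sqnormZB ip_inner) norm_act; ring.
under eq_imagel do rewrite expand.
by rewrite inf_image_affine ?mulr_gt0 //; exact: has_sup_ip_orbit.
Qed.
End IsometricAction.

Section HomogeneousMinimizer.
Variables (R : realType) (M : normedModType R) (k : M -> R) (s : R).
Hypothesis s_gt0 : 0 < s.
Hypothesis kZ : forall l v, 0 <= l -> k (l *: v) = l * k v.
Hypothesis k_ge0 : forall v, 0 <= k v.
Hypothesis k_sphere_ub : has_ubound [set k v | v in [set v : M | `|v| = 1]].

Let S := [set k v | v in [set v : M | `|v| = 1]].

Lemma norm_minimizer u :
  (forall m, `|u| ^+ 2 - 2 * s * k u <= `|m| ^+ 2 - 2 * s * k m) ->
  `|u| = s * sup S.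
Proof.
move=> u_min.
have [[v1 v1_unit]|no_unit] := pselect (exists v : M, `|v| = 1); last first.
  have S0 : S = set0.
    by apply/seteqP; split=> // x [v v_unit _]; apply: no_unit; exists v.
  rewrite S0 sup0 mulr0; apply/eqP; rewrite normr_eq0; apply/negPn/negP => u0.
  by apply: no_unit; exists (`|u|^-1 *: u); rewrite normfZV.
have le_sup v : `|v| = 1 -> k v <= sup S.
  by move=> v_unit; apply: sup_upper_bound; [split; [exists (k v1), v1|] | exists v].
have ku_le : k u <= `|u| * sup S.
  have [->|u0] := eqVneq u 0.
    by have := @kZ 0 0 (lexx 0); rewrite scale0r mul0r normr0 mul0r => ->.
  have u_gt0 : 0 < `|u| by rewrite normr_gt0.
  rewrite -[u in k u](scale1r u) -(mulfV (lt0r_neq0 u_gt0)) -scalerA kZ //.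
  by rewrite ler_wpM2l // le_sup // normfZV.
(* Test the minimality of [u] against the competitor [(s * k v) *: v]. *)
have key v : `|v| = 1 -> (s * k v) ^+ 2 <= 2 * s * `|u| * sup S - `|u| ^+ 2.
  move=> v_unit; have skv_ge0 : 0 <= s * k v by rewrite mulr_ge0 // ltW.
  have := u_min ((s * k v) *: v).
  rewrite kZ // normrZ v_unit mulr1 ger0_norm //.
  have : s * k u <= s * (`|u| * sup S) by rewrite ler_pM2l.
  nra.
set D := 2 * s * `|u| * sup S - `|u| ^+ 2 in key.
have D_ge0 : 0 <= D := le_trans (sqr_ge0 _) (key v1 v1_unit).
have sH_ge0 : 0 <= s * sup S.
  by rewrite mulr_ge0 ?(ltW s_gt0) // (le_trans (k_ge0 v1)) ?le_sup.
have sH_le : s * sup S <= Num.sqrt D.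
  rewrite -ler_pdivlMl //; apply: ge_sup; first by exists (k v1), v1.
  move=> _ [v v_unit <-]; rewrite ler_pdivlMl //.
  have skv_ge0 : 0 <= s * k v by rewrite mulr_ge0 // ltW.
  by rewrite -(ger0_norm skv_ge0) -sqrtr_sqr ler_sqrt // key.
have := ler_pM sH_ge0 sH_ge0 sH_le sH_le.
rewrite -!expr2 sqr_sqrtr // /D => sH_sqr.
apply/eqP; rewrite eq_le; apply/andP; split; nra.
Qed.
End HomogeneousMinimizer.

Section RealIntegrable.
Context d (T : measurableType d) (R : realType) (mu : {measure set T -> \bar R}).
Variable D : set T.
Hypothesis mD : measurable D.

Lemma integrableZl_EFin (k : R) (f : T -> R) :
  mu.-integrable D (EFin \o f) -> mu.-integrable D (EFin \o (fun x => k * f x)).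
Proof. by move=> /(integrableZl mD k); apply: eq_integrable. Qed.

Lemma integrableD_EFin (f g : T -> R) :
  mu.-integrable D (EFin \o f) -> mu.-integrable D (EFin \o g) ->
  mu.-integrable D (EFin \o (fun x => f x + g x)).
Proof. by move=> fi gi; apply: eq_integrable (integrableD mD fi gi). Qed.

Lemma integrableB_EFin (f g : T -> R) :
  mu.-integrable D (EFin \o f) -> mu.-integrable D (EFin \o g) ->
  mu.-integrable D (EFin \o (fun x => f x - g x)).
Proof. by move=> fi gi; apply: eq_integrable (integrableB mD fi gi). Qed.
End RealIntegrable.

Section FrechetFunction.
Variables (R : realType) (G : groupType) (M : normedModType R).
Variables (ip : M -> M -> R) (act : G -> M -> M).
Variables (d : measure_display) (T : measurableType d) (P : probability T R).
Variable eps : T -> M.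
Hypothesis ip_inner : is_inner_product ip.
Hypothesis act_isometric : linear_isometric_action act.
Hypothesis eps_centered : forall v : M,
  P.-integrable [set: T] (fun w => (ip v (eps w))%:E) /\
  (\int[P]_w (ip v (eps w))%:E = 0)%E.
Hypothesis measurable_norm_eps : measurable_fun [set: T] (fun w => `|eps w|).
Hypothesis sqnorm_eps_mean : (\int[P]_w (`|eps w| ^+ 2)%:E = 1)%E.
Hypothesis measurable_orbit_sup_ip :
  forall v : M, measurable_fun [set: T] (fun w => orbit_sup_ip ip act v (eps w)).

Definition expected_orbit_sup (v : M) : R :=
  \int[P]_w orbit_sup_ip ip act v (eps w).

Lemma integrable_sqnorm_eps : P.-integrable [set: T] (EFin \o (fun w => `|eps w| ^+ 2)).
Proof.
apply/integrableP; split.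
  by apply/measurable_realfun.measurable_EFinP; exact: measurable_realfun.measurable_funX.
under eq_integral do rewrite /comp abse_EFin ger0_norm ?exprn_ge0 //.
by rewrite sqnorm_eps_mean ltry.
Qed.

Lemma integrable_norm_eps : P.-integrable [set: T] (EFin \o (fun w => `|eps w|)).
Proof.
have bound_i := integrableD_EFin measurableT
  (finite_measure_integrable_cst P 1 measurableT) integrable_sqnorm_eps.
apply: le_integrable bound_i => //; first exact/measurable_realfun.measurable_EFinP.
move=> w _; rewrite /comp !abse_EFin lee_fin normr_id ger0_norm.
  by rewrite /cst; have := normr_ge0 (eps w); nra.
by rewrite addr_ge0 ?exprn_ge0.
Qed.

Lemma integrable_orbit_sup_ip v :
  P.-integrable [set: T] (EFin \o (fun w => orbit_sup_ip ip act v (eps w))).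
Proof.
apply: le_integrable (integrableZl_EFin measurableT `|v| integrable_norm_eps) => //.
  exact/measurable_realfun.measurable_EFinP.
move=> w _; rewrite /comp !abse_EFin lee_fin [leRHS]ger0_norm ?mulr_ge0 //.
exact: (norm_orbit_sup_ip_le ip_inner act_isometric v (eps w)).
Qed.

Lemma expected_orbit_supZ l v : 0 <= l ->
  expected_orbit_sup (l *: v) = l * expected_orbit_sup v.
Proof.
move=> l_ge0; rewrite /expected_orbit_sup -RintegralZl //.
  by apply: eq_Rintegral => w _; exact: orbit_sup_ipZ.
exact: integrable_orbit_sup_ip.
Qed.

Lemma expected_orbit_sup_ge0 v : 0 <= expected_orbit_sup v.
Proof.
have [ip_i ip_mean0] := eps_centered v.
have -> : 0 = \int[P]_w ip v (eps w) by rewrite /Rintegral ip_mean0.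
apply: le_Rintegral => // [|w _]; first exact: integrable_orbit_sup_ip.
by have := orbit_sup_ip_ge ip_inner act_isometric v (eps w) 1%g; rewrite act1.
Qed.

Lemma expected_orbit_sup_le v :
  expected_orbit_sup v <= `|v| * \int[P]_w `|eps w|.
Proof.
rewrite -RintegralZl //; last exact: integrable_norm_eps.
apply: le_Rintegral => //.
- exact: integrable_orbit_sup_ip.
- exact: integrableZl_EFin integrable_norm_eps.
- by move=> w _; exact: orbit_sup_ip_le.
Qed.

Lemma frechet_fun_shift t0 s u : (forall g, act g t0 = t0) -> 0 < s ->
  frechet_fun P act (fun w => t0 + s *: eps w) (t0 + u) =
  (s ^+ 2 + `|u| ^+ 2 - 2 * s * expected_orbit_sup u)%:E.
Proof.
move=> t0_fixed s_gt0; rewrite /frechet_fun.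
under eq_integral do rewrite (orbit_sqdist_shift ip_inner act_isometric _ _ t0_fixed s_gt0).
have sq_i := integrableZl_EFin measurableT (s ^+ 2) integrable_sqnorm_eps.
have cst_i := finite_measure_integrable_cst P (`|u| ^+ 2) measurableT.
have sup_i := integrableZl_EFin measurableT (2 * s) (integrable_orbit_sup_ip u).
have sum_i := integrableD_EFin measurableT sq_i cst_i.
rewrite -[LHS]fineK; last exact: integrable_fin_num (integrableB_EFin measurableT sum_i sup_i).
congr (_%:E); rewrite -/(Rintegral _ _ _) RintegralB // RintegralD // Rintegral_cst //.
rewrite [fine _](congr1 fine (probability_setT P)) mulr1.
rewrite (RintegralZl _ measurableT integrable_sqnorm_eps).
rewrite (RintegralZl _ measurableT (integrable_orbit_sup_ip u)).
by rewrite {1}/Rintegral sqnorm_eps_mean mulr1.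
Qed.

Lemma frechet_mean_norm_shift t0 s m_star :
  (forall g, act g t0 = t0) -> 0 < s ->
  is_frechet_mean P act (fun w => t0 + s *: eps w) m_star ->
  `|m_star - t0| = s * sup [set expected_orbit_sup v | v in [set v : M | `|v| = 1]].
Proof.
move=> t0_fixed s_gt0 m_star_min.
have m_star_eq : m_star = t0 + (m_star - t0) by rewrite addrC subrK.
apply: norm_minimizer => //.
- exact: expected_orbit_supZ.
- exact: expected_orbit_sup_ge0.
- exists (\int[P]_w `|eps w|) => _ [v v_unit <-].
  by have := expected_orbit_sup_le v; rewrite v_unit mul1r.
- move=> m; have := m_star_min (t0 + m).
  by rewrite [in X in (X <= _)%E]m_star_eq !frechet_fun_shift // lee_fin -!addrA lerD2l.
Qed.
End FrechetFunction.

Theorem mainTheorem19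
  (R : realType) (G : groupType) (M : completeNormedModType R)
  (ip : M -> M -> R) (act : G -> M -> M)
  (d : measure_display) (T : measurableType d) (P : probability T R)
  (eps : T -> M) (t0 : M) (sigma : R) (m_star : M) :
  is_inner_product ip ->
  linear_isometric_action act ->
  (forall g, act g t0 = t0) ->
  0 < sigma ->
  (* E(eps) = 0 (weakly: every coordinate <v, eps> is integrable with mean 0) *)
  (forall v : M, P.-integrable [set: T] (fun w => (ip v (eps w))%:E) /\
                 (\int[P]_w (ip v (eps w))%:E = 0)%E) ->
  measurable_fun [set: T] (fun w => `|eps w|) ->
  (\int[P]_w (`|eps w| ^+ 2)%:E = 1)%E ->
  (forall v : M, measurable_fun [set: T] (fun w => orbit_sup_ip ip act v (eps w))) ->
  (forall m : M, measurable_fun [set: T]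
                   (fun w => orbit_sqdist act (t0 + sigma *: eps w) m)) ->
  is_frechet_mean P act (fun w => t0 + sigma *: eps w) m_star ->
  dQ act t0 m_star =
  sigma * sup [set Rintegral P [set: T] (fun w => orbit_sup_ip ip act v (eps w))
              | v in [set v : M | `|v| = 1]].
Proof.
(* F is computed in closed form. *)
move=> ip_inner act_isometric t0_fixed sigma_gt0 eps_centered norm_eps_meas
  sqnorm_eps_mean orbit_sup_meas _ m_star_min.
rewrite dQ_fixed // distrC.
exact: frechet_mean_norm_shift m_star_min.
Qed.
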